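(* Let $\psi(x,z)=\frac{1}{f(z)}P(x,\partial)e^{xz}$ be a Darboux transform of $e^{xz}$, with $f,g,P,Q$ as in the definition, so that $Q(x,\partial)P(x,\partial)=f(\partial)g(\partial)$. Put $\psi^*(x,z)=\frac{1}{g(z)}Q^*e^{-xz}$, where $Q^*$ is the formal adjoint of $Q$. Then for all integers $i,j\ge 0$, $$\mathrm{res}_z\big(\partial^i\psi(x,z)\cdot\partial^j\psi^*(x,z)\big)=0 .$$ Consequently, assuming $e^{-xz}\psi$ and $e^{xz}\psi^*$ are regular at $x=0$, the spaces $$V=\mathrm{span}\{\partial^i\psi(x,z)|_{x=0}\}\quad\text{and}\quad V^*=\mathrm{span}\{\partial^i\psi^*(x,z)|_{x=0}\}$$ are orthogonal with respect to the bilinear form $B(u,v)=\mathrm{res}_z\,u(z)v(z)$.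
   Context: Notation: $\partial=\frac{\partial}{\partial x}$. Darboux transform: there exist monic polynomials $f(z),g(z)$ and monic differential operators $P,Q$ with $\psi=\frac1{f(z)}Pe^{xz}$, $e^{xz}=\frac1{g(z)}Q\psi$, and $\mathrm{ord}\,P=\deg f$. Formal adjoint: defined by $(a(x)\partial^k)^*=(-\partial)^k\circ a(x)$, extended linearly. Residue: $\mathrm{res}_z$ denotes the coefficient of $z^{-1}$ in the Laurent expansion around $z=\infty$. The product $\partial^i\psi\,\partial^j\psi^*$ has the exponential factors $e^{xz}e^{-xz}$ cancel, so it is rational in $z$. *)

From HB Require Import structures.
From mathcomp Require Import all_boot all_order all_algebra.
Set Implicit Arguments. Unset Strict Implicit. Unset Printing Implicit Defensive.
Import Order.TTheory GRing.Theory Num.Theory.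
Local Open Scope ring_scope.

(* Algebraic model.
   - F : field of constants (e.g. C).
   - R : commutative F-algebra of "functions of x", with an F-linear
         derivation delta = d/dx.
   - A differential operator  sum_k a_k(x) d^k  is encoded by its coefficient
     list, i.e. a polynomial P : {poly R} with P`_k = a_k.
   - A function of the form  e^{xz} h(x,z)  with h : {poly R} (polynomial in z
     with coefficients in R) is encoded by h; likewise e^{-xz} h. *)

Section Defs.
Variables (F : fieldType) (R : comAlgType F).

(* d (e^{xz} h) = e^{xz} (dh/dx + z h) *)
Definition Dplus (delta : R -> R) (h : {poly R}) : {poly R} :=
  map_poly delta h + 'X * h.

(* d (e^{-xz} h) = e^{-xz} (dh/dx - z h) *)
Definition Dminus (delta : R -> R) (h : {poly R}) : {poly R} :=
  map_poly delta h - 'X * h.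

(* (sum_k a_k d^k) (e^{xz} h) = e^{xz} * apply_op delta P h *)
Definition apply_op (delta : R -> R) (P : {poly R}) (h : {poly R}) : {poly R} :=
  \sum_(k < size P) P`_k *: iter k (Dplus delta) h.

(* Formal adjoint: (a d^k)^* = (-d)^k o a, extended linearly.
   Q^* (e^{-xz} h) = e^{-xz} * apply_adj delta Q h *)
Definition apply_adj (delta : R -> R) (Q : {poly R}) (h : {poly R}) : {poly R} :=
  \sum_(k < size Q) iter k (fun u => - Dminus delta u) (Q`_k *: h).

Definition is_derivation (delta : R -> R) : Prop :=
  (forall (c : F) (a b : R), delta (c *: a + b) = c *: delta a + delta b) /\
  (forall a b : R, delta (a * b) = delta a * b + a * delta b).

Definition polyR (f : {poly F}) : {poly R} := map_poly (in_alg R) f.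

(* S is a differential subalgebra of "functions regular at x = 0" and ev is
   evaluation at x = 0 on S (an F-algebra morphism S -> F). *)
Definition regular_at0 (delta : R -> R) (S : pred R) (ev : R -> F) : Prop :=
  [/\ (forall c : F, c%:A \in S /\ ev c%:A = c),
      (forall a b, a \in S -> b \in S ->
         [/\ a + b \in S, a * b \in S, ev (a + b) = ev a + ev b &
             ev (a * b) = ev a * ev b]) &
      (forall a, a \in S -> delta a \in S)].

End Defs.

(* Residue at z = infinity (coefficient of z^{-1} in the Laurent expansion
   around z = infinity) of the rational function N(z)/D(z), D monic of
   degree d.  Writing D(z) = z^d (a_0 + a_1 z^{-1} + ... + a_d z^{-d}) with
   a_j = D_{d-j}, a_0 = 1, we have 1/D = z^{-d} sum_k e_k z^{-k} where
   (e_k) is the inverse power series of sum_j a_j w^j: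
   e_0 = 1, e_k = - sum_{j=1}^{k} a_j e_{k-j}.  Then the coefficient of
   z^{-1} in N/D = sum_i N_i z^{i-d} sum_k e_k z^{-k} is
   sum_{i >= d-1} N_i e_{i+1-d}. *)
Section Residue.
Variable T : comNzRingType.

Definition rev_coef (D : {poly T}) (j : nat) : T :=
  if (j <= (size D).-1)%N then D`_((size D).-1 - j) else 0.

Fixpoint inv_series (D : {poly T}) (n : nat) : seq T :=
  match n with
  | 0 => [:: 1]
  | n'.+1 => let s := inv_series D n' in
      rcons s (- \sum_(1 <= j < n'.+2) rev_coef D j * s`_(n'.+1 - j))
  end.

Definition inv_coef (D : {poly T}) (k : nat) : T := (inv_series D k)`_k.

Definition res_inf (N D : {poly T}) : T :=
  \sum_(i < size N)
     (if ((size D).-1 <= i.+1)%N then N`_i * inv_coef D (i.+1 - (size D).-1)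
      else 0).
End Residue.

From HB Require Import structures.
From mathcomp Require Import all_boot all_order all_algebra.
From mathcomp Require Import zify.
From Stdlib Require Import FunctionalExtensionality Lia.
Set Implicit Arguments. Unset Strict Implicit. Unset Printing Implicit Defensive.
Import GRing.Theory.
Local Open Scope ring_scope.

(* In pseudo-differential language res_z (d^i psi . d^j psi^* ) is the
   residue of d^i P D^{-1} Q (-d)^j, and P D^{-1} Q = 1 because Q P = D.  We
   make this argument concrete without pseudo-differential operators:
   - res_inf is bilinear, and 1/D expands as \sum_e gam_e z^{-e-1}, where the
     gam_e obey the recurrence of D (gam_rec) and are determined by it;
   - functions e^{xz} y(z) with y a series of bounded degree in z are modelled
     by sequences; d acts on them by Dser and an operator A by Oser A, and
     Oser turns composition of operators into composition of maps;
   - a monic operator acts triangularly on such series, hence is injective and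
     (by a causal recursion) invertible: Dinv;
   - for B = Dm^j (Q^* 1) the series u = D^{-1} (\sum_l d^l o B_l) z^N
     computes the residue of A B / D as the z^{-1}-coefficient of Oser A u
     (res_inf_pairing), while Q (P u) = D u = Q (z^N (-z)^j); so P u =
     z^N (-z)^j and the residue for A = Dp^i P vanishes (darboux_residue).
   The orthogonality of V and V^* at x = 0 follows since evaluation at x = 0
   commutes with residues, the coefficients of 1/D being constants. *)

Lemma big_ord_widen0 (V : nmodType) n m (G : nat -> V) : (n <= m)%N ->
  (forall i, (n <= i < m)%N -> G i = 0) ->
  \sum_(i < n) G i = \sum_(i < m) G i.
Proof.
move=> le_nm G0; rewrite (big_ord_widen m G le_nm) big_mkcond.
apply: eq_bigr => i _; case: ifP => // /negbT; rewrite -leqNgt => le_ni.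
by rewrite G0 // le_ni ltn_ord.
Qed.

Lemma monic_sizeS (T : nzSemiRingType) (p : {poly T}) : p \is monic -> exists d, size p = d.+1.
Proof. by move=> mon_p; exists (size p).-1; rewrite prednK // size_poly_gt0 monic_neq0. Qed.

Lemma monic_coef_top (T : nzSemiRingType) (p : {poly T}) d :
  p \is monic -> size p = d.+1 -> p`_d = 1.
Proof. by move=> /monicP + sizep; rewrite /lead_coef sizep. Qed.

Section CausalRecursion.
Variable V : Type.
Implicit Types y w : nat -> V.

Definition agree_below (K : nat) y y' : Prop := forall k, (k < K)%N -> y k = y' k.

Lemma agree_below_le K K' y y' : (K' <= K)%N -> agree_below K y y' -> agree_below K' y y'.
Proof. by move=> le_K'K agr k lt_kK'; apply: agr; apply: leq_trans le_K'K. Qed.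

Definition causal (G : (nat -> V) -> nat -> V) : Prop :=
  forall w w' K, agree_below K w w' -> G w K = G w' K.

(* For causal G, iterating G from any sequence stabilises index by index;
   this yields a solution of w = G w. *)
Definition causal_fix (x0 : V) (G : (nat -> V) -> nat -> V) : nat -> V :=
  fun K => iter K.+1 G (fun _ => x0) K.

Lemma causal_fixE x0 G : causal G -> forall K, causal_fix x0 G K = G (causal_fix x0 G) K.
Proof.
move=> cG; set w0 := fun _ : nat => x0.
have stable s t : (s <= t)%N -> agree_below s (iter s G w0) (iter t G w0).
  elim: s t => [|s IH] [|t] //= le_st k lt_ks.
  by apply: cG; apply: (agree_below_le (K := s)) (IH t le_st).
move=> K; rewrite {1}/causal_fix /=; apply: cG => k lt_kK.
exact: (esym (stable k.+1 K lt_kK k (ltnSn k))).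
Qed.

End CausalRecursion.

Section Residue.
Variable T : comNzRingType.
Implicit Types D N A B : {poly T}.

Lemma size_inv_series D n : size (inv_series D n) = n.+1.
Proof. by elim: n => //= n IH; rewrite size_rcons IH. Qed.

Lemma inv_seriesE D n k : (k <= n)%N -> (inv_series D n)`_k = inv_coef D k.
Proof.
move=> le_kn; rewrite /inv_coef; elim: n le_kn => [|n IH]; first by rewrite leqn0 => /eqP ->.
rewrite leq_eqVlt => /orP [/eqP -> //|lt_kn].
by rewrite /= nth_rcons size_inv_series lt_kn IH.
Qed.

Lemma inv_coefS D n : inv_coef D n.+1 =
  - \sum_(1 <= j < n.+2) rev_coef D j * inv_coef D (n.+1 - j).
Proof.
rewrite {1}/inv_coef /= nth_rcons size_inv_series ltnn eqxx; congr (- _).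
apply: eq_big_nat => j /andP [j_gt0 _]; rewrite inv_seriesE //.
by rewrite leq_subLR -addn1 addnC leq_add2r.
Qed.

(* gam D e is the coefficient of z^{-e-1} in the expansion of 1/D at infinity. *)
Definition gam D (e : nat) : T :=
  if ((size D).-1 <= e.+1)%N then inv_coef D (e.+1 - (size D).-1) else 0.

Lemma res_infE N D M : (size N <= M)%N ->
  res_inf N D = \sum_(i < M) N`_i * gam D i.
Proof.
move=> le_NM; rewrite /res_inf.
rewrite (eq_bigr (fun i : 'I_(size N) => N`_i * gam D i)); last first.
  by move=> i _; rewrite /gam; case: ifP; rewrite ?mulr0.
by apply: (big_ord_widen0 (G := fun i => N`_i * gam D i)) => // i /andP [le_Ni _];
  rewrite nth_default ?mul0r.
Qed.

Lemma res_infD D N1 N2 : res_inf (N1 + N2) D = res_inf N1 D + res_inf N2 D.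
Proof.
set M := maxn (size N1) (size N2).
rewrite !(@res_infE _ D M) ?leq_maxl ?leq_maxr ?(leq_trans (size_add _ _)) //.
by rewrite -big_split; apply: eq_bigr => i _; rewrite coefD mulrDl.
Qed.

Lemma res_infZ D c N : res_inf (c *: N) D = c * res_inf N D.
Proof.
rewrite !(@res_infE _ D (size N)) ?size_scale_leq // mulr_sumr.
by apply: eq_bigr => i _; rewrite coefZ mulrA.
Qed.

Lemma res_inf_sum D I r (P : pred I) (G : I -> {poly T}) :
  res_inf (\sum_(i <- r | P i) G i) D = \sum_(i <- r | P i) res_inf (G i) D.
Proof.
apply: (big_morph (fun N => res_inf N D) (res_infD D)).
by rewrite /res_inf size_poly0 big_ord0.
Qed.

Lemma res_infXn D e : res_inf 'X^e D = gam D e.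
Proof.
rewrite (@res_infE _ D e.+1) ?size_polyXn // big_ord_recr /= coefXn eqxx mul1r.
by rewrite big1 ?add0r // => i _; rewrite coefXn (ltn_eqF (ltn_ord i)) mul0r.
Qed.

Lemma poly_expand A M : (size A <= M)%N -> A = \sum_(t < M) A`_t *: 'X^t.
Proof.
move=> le_AM; rewrite -{1}[A]coefK poly_def.
apply: (big_ord_widen0 (G := fun t => A`_t *: 'X^t)) => // t /andP [le_At _].
by rewrite nth_default ?scale0r.
Qed.

Lemma res_inf_mul D A B M1 M2 : (size A <= M1)%N -> (size B <= M2)%N ->
  res_inf (A * B) D = \sum_(t < M1) \sum_(l < M2) A`_t * B`_l * gam D (t + l)%N.
Proof.
move=> le_AM le_BM; rewrite {1}(poly_expand le_AM) {1}(poly_expand le_BM).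
rewrite mulr_suml res_inf_sum; apply: eq_bigr => t _.
rewrite mulr_sumr res_inf_sum; apply: eq_bigr => l _.
by rewrite -scalerAl -scalerAr scalerA -exprD res_infZ res_infXn.
Qed.

(* D (1/D) has no negative powers of z: the gam's obey the recurrence of D. *)
Lemma gam_rec D d a : D \is monic -> size D = d.+1 ->
  \sum_(k < d.+1) D`_k * gam D (k + a)%N = 0.
Proof.
move=> monD sizeD; have lcD := monic_coef_top monD sizeD.
rewrite big_ord_recr /= lcD mul1r {2}/gam sizeD /= ifT; last by lia.
rewrite (_ : ((d + a).+1 - d = a.+1)%N); last by lia.
rewrite inv_coefS; apply/eqP; rewrite subr_eq0; apply/eqP.
pose G i := if (i < a.+1)%N && (i < d)%N then D`_(d - i.+1) * inv_coef D (a - i) else 0.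
transitivity (\sum_(i < a.+1 + d) G i).
  rewrite -(big_ord_widen0 (n := d) (m := a.+1 + d) (G := G)); first last.
  - by move=> i /andP [le_di _]; rewrite /G (ltnNge i d) le_di andbF.
  - exact: leq_addl.
  rewrite (reindex_inj rev_ord_inj); apply: eq_bigr => i _.
  have lt_id := ltn_ord i; rewrite /G /gam sizeD /= lt_id andbT.
  have -> : (d <= (d - i.+1 + a).+1)%N = (i < a.+1)%N by apply/idP/idP; lia.
  case: ifP => lt_ia; last by rewrite mulr0.
  by have -> : ((d - i.+1 + a).+1 - d = a - i)%N by lia.
rewrite -(big_ord_widen0 (n := a.+1) (m := a.+1 + d) (G := G)); first last.
- by move=> i /andP [le_ai _]; rewrite /G ltnNge le_ai.
- exact: leq_addr.
rewrite big_add1 /= big_mkord; apply: eq_bigr => i _.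
rewrite /G /rev_coef sizeD /= ltn_ord /= subSS.
by case: ifP; rewrite ?mul0r.
Qed.

Lemma res_inf_bilinear D n m (a b : nat -> T) (X Y : nat -> {poly T}) :
  res_inf ((\sum_(i < n) a i *: X i) * (\sum_(j < m) b j *: Y j)) D =
  \sum_(i < n) \sum_(j < m) a i * b j * res_inf (X i * Y j) D.
Proof.
rewrite mulr_suml res_inf_sum; apply: eq_bigr => i _.
rewrite mulr_sumr res_inf_sum; apply: eq_bigr => j _.
by rewrite -scalerAl -scalerAr !res_infZ mulrA.
Qed.

Lemma recurrence_unique D d (v v' : nat -> T) : D \is monic -> size D = d.+1 ->
  (forall a, \sum_(k < d.+1) D`_k * v (k + a)%N = 0) ->
  (forall a, \sum_(k < d.+1) D`_k * v' (k + a)%N = 0) ->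
  agree_below d v v' -> forall e, v e = v' e.
Proof.
move=> monD sizeD rec_v rec_v' agr; have lcD := monic_coef_top monD sizeD.
have top (u : nat -> T) a : (forall b, \sum_(k < d.+1) D`_k * u (k + b)%N = 0) ->
    u (d + a)%N = - \sum_(k < d) D`_k * u (k + a)%N.
  move=> rec_u; apply/eqP; rewrite -addr_eq0 addrC.
  by have := rec_u a; rewrite big_ord_recr /= lcD mul1r => ->.
elim/ltn_ind => e IH; case: (ltnP e d) => [lt_ed|le_de]; first exact: agr.
have [a def_e] : exists a, e = (d + a)%N by exists (e - d)%N; lia.
rewrite def_e.
rewrite (top v a rec_v) (top v' a rec_v'); congr (- _); apply: eq_bigr => k _.
by rewrite IH //; have := ltn_ord k; lia.
Qed.

Lemma gam_lt D d e : size D = d.+1 -> (e.+1 < d)%N -> gam D e = 0.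
Proof. by move=> sizeD lt_ed; rewrite /gam sizeD /= leqNgt lt_ed. Qed.

Lemma gam_top D d : size D = d.+1 -> (0 < d)%N -> gam D d.-1 = 1.
Proof. by move=> sizeD d_gt0; rewrite /gam sizeD /= prednK // leqnn subnn. Qed.

End Residue.

Lemma gam_map (T T' : comNzRingType) (phi : {rmorphism T -> T'}) (D : {poly T}) e :
  injective phi -> gam (map_poly phi D) e = phi (gam D e).
Proof.
move=> inj_phi.
have size_phi : size (map_poly phi D) = size D by rewrite size_map_inj_poly ?rmorph0.
have rev_phi j : rev_coef (map_poly phi D) j = phi (rev_coef D j).
  by rewrite /rev_coef size_phi; case: ifP; rewrite ?coef_map ?rmorph0.
have inv_phi n : inv_series (map_poly phi D) n = map phi (inv_series D n).
  elim: n => [|n IH] /=; first by rewrite rmorph1.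
  rewrite IH map_rcons rmorphN rmorph_sum; congr (rcons _ (- _)).
  apply: eq_big_nat => j /andP [j_gt0 _]; rewrite rmorphM rev_phi; congr (_ * _).
  by rewrite (nth_map 0) // size_inv_series; lia.
rewrite /gam size_phi; case: ifP; rewrite ?rmorph0 // => _.
by rewrite /inv_coef inv_phi (nth_map 0) // size_inv_series.
Qed.

Section Derivation.
Variables (F : fieldType) (R : comAlgType F) (delta : R -> R).
Hypothesis derivation_delta : is_derivation delta.

Lemma derivD a b : delta (a + b) = delta a + delta b.
Proof. by have := (proj1 derivation_delta) 1 a b; rewrite !scale1r. Qed.

Lemma deriv0 : delta 0 = 0.
Proof. by apply: (addrI (delta 0)); rewrite -derivD !addr0. Qed.

Lemma derivN a : delta (- a) = - delta a.
Proof. by apply: (addrI (delta a)); rewrite -derivD !subrr deriv0. Qed.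

Lemma derivM a b : delta (a * b) = delta a * b + a * delta b.
Proof. exact: (proj2 derivation_delta). Qed.

Lemma deriv_sum I r (P : pred I) (G : I -> R) :
  delta (\sum_(i <- r | P i) G i) = \sum_(i <- r | P i) delta (G i).
Proof. exact: (big_morph _ derivD deriv0). Qed.

Lemma deriv_alg c : delta c%:A = 0.
Proof.
have d1 : delta 1 = 0.
  have := derivM 1 1; rewrite !mulr1 mul1r => d1M.
  by apply: (addrI (delta 1)); rewrite addr0 -d1M.
by have := (proj1 derivation_delta) c 1 0; rewrite addr0 deriv0 addr0 d1 scaler0 -in_algE.
Qed.

Local Notation Dp := (Dplus delta).
Local Notation Dm := (Dminus delta).

Definition const_coefs (h : {poly R}) : Prop := forall k, delta h`_k = 0.

Lemma const_coefs_polyR (h : {poly F}) : const_coefs (polyR R h).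
Proof. by move=> k; rewrite coef_map deriv_alg. Qed.

Lemma coef_Dplus h k : (Dp h)`_k = delta h`_k + (if k == 0%N then 0 else h`_k.-1).
Proof. by rewrite /Dplus coefD coef_map_id0 ?deriv0 // coefXM. Qed.

Lemma coef_Dminus h k : (Dm h)`_k = delta h`_k - (if k == 0%N then 0 else h`_k.-1).
Proof. by rewrite /Dminus coefB coef_map_id0 ?deriv0 // coefXM. Qed.

Lemma size_Dplus h : (size (Dp h) <= (size h).+1)%N.
Proof.
apply/leq_sizeP => k lt_hk; rewrite coef_Dplus nth_default ?deriv0 ?add0r; last exact: ltnW.
by case: k lt_hk => // k lt_hk; rewrite nth_default.
Qed.

Lemma DplusD : {morph Dp : a b / a + b}.
Proof.
move=> a b; apply/polyP => k; rewrite !(coefD, coef_Dplus) derivD.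
by case: eqP => _; rewrite ?addr0 // addrACA.
Qed.

Lemma Dplus0 : Dp 0 = 0.
Proof. by apply/polyP => k; rewrite coef_Dplus !coef0 deriv0 add0r; case: eqP. Qed.

Lemma DplusN : {morph Dp : a / - a}.
Proof.
move=> a; apply/polyP => k; rewrite !(coefN, coef_Dplus) derivN.
by case: eqP => _; rewrite ?oppr0 ?addr0 // opprD.
Qed.

Lemma DplusX h : Dp ('X * h) = 'X * Dp h.
Proof.
apply/polyP => k; rewrite coefXM !coef_Dplus coefXM.
by case: k => [|k] /=; rewrite ?deriv0 ?addr0 ?coefXM.
Qed.

Lemma Dplus_const h : const_coefs h -> Dp h = 'X * h.
Proof. by move=> ch; apply/polyP => k; rewrite coef_Dplus ch add0r coefXM. Qed.

Lemma iter_DplusD n : {morph iter n Dp : a b / a + b}.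
Proof. by move=> a b; elim: n => //= n ->; rewrite DplusD. Qed.

Lemma iter_DplusN n : {morph iter n Dp : a / - a}.
Proof. by move=> a; elim: n => //= n ->; rewrite DplusN. Qed.

Lemma iter_Dplus0 n : iter n Dp 0 = 0.
Proof. by elim: n => //= n ->; rewrite Dplus0. Qed.

Lemma iter_DplusX n h : iter n Dp ('X * h) = 'X * iter n Dp h.
Proof. by elim: n => //= n ->; rewrite DplusX. Qed.

Lemma Dplus_sum I r (P : pred I) (G : I -> {poly R}) :
  Dp (\sum_(i <- r | P i) G i) = \sum_(i <- r | P i) Dp (G i).
Proof. exact: (big_morph _ DplusD Dplus0). Qed.

Lemma iter_Dplus_const n h : const_coefs h -> iter n Dp h = 'X^n * h.
Proof.
move=> ch; elim: n => [|n IH]; first by rewrite mul1r.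
by rewrite iterSr Dplus_const // iter_DplusX IH exprS mulrA.
Qed.

Lemma apply_op_const P h : const_coefs h -> apply_op delta P h = P * h.
Proof.
move=> ch; rewrite /apply_op -[in RHS](coefK P) poly_def mulr_suml.
by apply: eq_bigr => k _; rewrite iter_Dplus_const // -scalerAl.
Qed.

Implicit Types v : {poly R}.

(* Writing a function e^{-xz} v(x,z), v = \sum_l v_l(x) z^l, the operator
   \sum_l d^l o v_l(x) acts on e^{xz} as multiplication by dual_symbol v.
   It inverts the formal adjoint (dual_symbol (Q^* 1) = Q) and turns d on the
   e^{-xz} side into multiplication by -z. *)
Definition dual_symbol v : {poly R} :=
  \sum_(l < size v) iter l Dp (v`_l)%:P.

Lemma dual_symbolE v M : (size v <= M)%N ->
  dual_symbol v = \sum_(l < M) iter l Dp (v`_l)%:P.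
Proof.
move=> le_vM; apply: (big_ord_widen0 (G := fun l => iter l Dp (v`_l)%:P)) => // l.
by case/andP=> le_vl _; rewrite nth_default // iter_Dplus0.
Qed.

Lemma dual_symbolD : {morph dual_symbol : a b / a + b}.
Proof.
move=> a b; set M := maxn (size a) (size b).
rewrite !(@dual_symbolE _ M) ?leq_maxl ?leq_maxr ?(leq_trans (size_add _ _)) //.
by rewrite -big_split; apply: eq_bigr => l _; rewrite coefD polyCD iter_DplusD.
Qed.

Lemma dual_symbolN : {morph dual_symbol : a / - a}.
Proof.
move=> a; rewrite !(@dual_symbolE _ (size a)) ?size_opp // -sumrN.
by apply: eq_bigr => l _; rewrite coefN polyCN iter_DplusN.
Qed.

Lemma dual_symbol_sum I r (P : pred I) (G : I -> {poly R}) :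
  dual_symbol (\sum_(i <- r | P i) G i) = \sum_(i <- r | P i) dual_symbol (G i).
Proof. by apply: (big_morph _ dual_symbolD); rewrite /dual_symbol size_poly0 big_ord0. Qed.

Lemma dual_symbolC r : dual_symbol r%:P = r%:P.
Proof. by rewrite (@dual_symbolE _ 1) ?size_polyC ?leq_b1 // big_ord1 coefC. Qed.

Lemma dual_symbolX v : dual_symbol ('X * v) = Dp (dual_symbol v).
Proof.
have le_Xv : (size ('X * v)%R <= (size v).+1)%N.
  by rewrite (leq_trans (size_mul_leq _ _)) // size_polyX.
rewrite (dual_symbolE le_Xv) big_ord_recl coefXM /= polyC0 add0r Dplus_sum.
by apply: eq_bigr => l _; rewrite coefXM.
Qed.

Lemma dual_symbol_deriv v :
  dual_symbol (map_poly delta v) = Dp (dual_symbol v) - 'X * dual_symbol v.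
Proof.
rewrite (@dual_symbolE _ (size v)) ?size_poly // Dplus_sum mulr_sumr -sumrB.
apply: eq_bigr => l _; rewrite coef_map_id0 ?deriv0 //.
rewrite -[Dp (iter l Dp _)]/(iter l.+1 Dp _) iterSr -iter_DplusX -iter_DplusN -iter_DplusD.
congr (iter l Dp _); apply/polyP => k; rewrite coefD coefN coef_Dplus coefXM !coefC addrK.
by case: eqP; rewrite ?deriv0.
Qed.

Lemma dual_symbol_Dminus v : dual_symbol (Dm v) = - ('X * dual_symbol v).
Proof.
rewrite /Dminus dual_symbolD dual_symbolN dual_symbol_deriv dual_symbolX.
by rewrite addrAC subrr add0r.
Qed.

Lemma dual_symbol_adj Q : dual_symbol (apply_adj delta Q 1) = Q.
Proof.
have iter_adj n w : dual_symbol (iter n (fun u => - Dm u) w) = 'X^n * dual_symbol w.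
  elim: n => /= [|n IH]; first by rewrite mul1r.
  by rewrite dual_symbolN dual_symbol_Dminus opprK IH exprS mulrA.
rewrite /apply_adj dual_symbol_sum -[RHS]coefK poly_def; apply: eq_bigr => k _.
by rewrite iter_adj alg_polyC dual_symbolC mulrC mul_polyC.
Qed.

(* Formal series of bounded degree in z: y : nat -> R stands for
   e^{xz} \sum_k y k z^{N-k} for some fixed top degree N.  In this model d
   acts by Dser and the operator with coefficient list A by Oser A. *)
Local Notation series := (nat -> R).
Implicit Types (A B U : {poly R}) (y : series).

Definition Dser (y : series) : series := fun k => delta (y k) + y k.+1.

Definition Oser (A : {poly R}) (y : series) : series :=
  fun k => \sum_(t < size A) A`_t * iter t Dser y k.

Definition ser (N : nat) (U : {poly R}) : series :=
  fun k => if (k <= N)%N then U`_(N - k) else 0.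

Lemma OserE A y k M : (size A <= M)%N ->
  Oser A y k = \sum_(t < M) A`_t * iter t Dser y k.
Proof.
move=> le_AM; apply: (big_ord_widen0 (G := fun t => A`_t * iter t Dser y k)) => // t.
by case/andP=> le_At _; rewrite nth_default ?mul0r.
Qed.

Lemma OserD A B y k : Oser (A + B) y k = Oser A y k + Oser B y k.
Proof.
set M := maxn (size A) (size B).
rewrite !(@OserE _ _ _ M) ?leq_maxl ?leq_maxr ?(leq_trans (size_add _ _)) //.
by rewrite -big_split; apply: eq_bigr => t _; rewrite coefD mulrDl.
Qed.

Lemma OserZ r A y k : Oser (r *: A) y k = r * Oser A y k.
Proof.
rewrite !(@OserE _ _ _ (size A)) ?size_scale_leq // mulr_sumr.
by apply: eq_bigr => t _; rewrite coefZ mulrA.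
Qed.

Lemma Oser_sum I r (P : pred I) (G : I -> {poly R}) y k :
  Oser (\sum_(i <- r | P i) G i) y k = \sum_(i <- r | P i) Oser (G i) y k.
Proof.
apply: (big_morph (fun A => Oser A y k) (fun A B => OserD A B y k)).
by rewrite /Oser size_poly0 big_ord0.
Qed.

Lemma Oser_Dplus A y : Oser (Dp A) y = Dser (Oser A y).
Proof.
apply: functional_extensionality => k.
rewrite (@OserE _ _ _ (size A).+1) ?size_Dplus //.
rewrite /Dser /Oser deriv_sum.
under eq_bigr do rewrite coef_Dplus mulrDl.
rewrite big_split /= big_ord_recr /= nth_default // deriv0 mul0r addr0.
rewrite big_ord_recl /= mul0r add0r.
under [in RHS]eq_bigr do rewrite derivM.
rewrite big_split /= -addrA; congr (_ + _).
by rewrite -big_split /=; apply: eq_bigr => i _; rewrite -mulrDr.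
Qed.

Lemma Oser_iter_Dplus n A y : Oser (iter n Dp A) y = iter n Dser (Oser A y).
Proof. by elim: n => //= n IH; rewrite Oser_Dplus IH. Qed.

Lemma Oser_comp Q P y : Oser (apply_op delta Q P) y = Oser Q (Oser P y).
Proof.
apply: functional_extensionality => k.
rewrite /apply_op Oser_sum; apply: eq_bigr => i _.
by rewrite OserZ Oser_iter_Dplus.
Qed.

Lemma Oser_X A y : Oser ('X * A) y = Oser A (Dser y).
Proof.
apply: functional_extensionality => k.
rewrite (@OserE _ _ _ (size A).+1); last first.
  by rewrite (leq_trans (size_mul_leq _ _)) // size_polyX.
rewrite big_ord_recl coefXM /= mul0r add0r.
by apply: eq_bigr => i _; rewrite coefXM /= add0n -iterSr.
Qed.

Lemma Oser_const_iter_Dser n A y : const_coefs A ->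
  Oser A (iter n Dser y) = iter n Dser (Oser A y).
Proof.
move=> cA; elim: n => //= n <-.
by rewrite -Oser_Dplus Dplus_const // Oser_X.
Qed.

Lemma iter_Dser_sum n m (W : nat -> series) k :
  iter n Dser (fun i => \sum_(l < m) W l i) k = \sum_(l < m) iter n Dser (W l) k.
Proof.
elim: n k => //= n IH k.
by rewrite /Dser !IH deriv_sum -big_split.
Qed.

Lemma Oser_series_sum A m (W : nat -> series) k :
  Oser A (fun i => \sum_(l < m) W l i) k = \sum_(l < m) Oser A (W l) k.
Proof.
rewrite /Oser exchange_big; apply: eq_bigr => t _.
by rewrite iter_Dser_sum mulr_sumr.
Qed.

Lemma Dser_ser N U : Dser (ser N U) = ser N (Dp U).
Proof.
apply: functional_extensionality => k; rewrite /Dser /ser coef_Dplus.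
case: (ltngtP k N) => [lt_kN|lt_Nk|->].
- by rewrite subn_eq0 leqNgt lt_kN /= subnS.
- by rewrite deriv0 addr0.
- by rewrite subnn.
Qed.

Lemma iter_Dser_ser n N U : iter n Dser (ser N U) = ser N (iter n Dp U).
Proof. by elim: n => //= n ->; rewrite Dser_ser. Qed.

Lemma Oser_ser A N U : Oser A (ser N U) = ser N (apply_op delta A U).
Proof.
apply: functional_extensionality => k.
rewrite /Oser /apply_op {2}/ser; under eq_bigr do rewrite iter_Dser_ser {1}/ser.
case: ifP => _; last by rewrite big1 // => t _; rewrite mulr0.
by rewrite coef_sum; apply: eq_bigr => t _; rewrite coefZ.
Qed.

(* Triangularity: Dser shifts the index by one, so (Oser A y) k only involves
   y at indices <= k + ord A, with y (k + ord A) entering with coefficient 1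
   when A is monic. *)
Definition vanish_below (K : nat) y : Prop := agree_below K y (fun _ => 0).

Lemma iter_Dser0 n : iter n Dser (fun _ => 0) = (fun _ => 0).
Proof.
elim: n => //= n ->; apply: functional_extensionality => k.
by rewrite /Dser deriv0 addr0.
Qed.

Lemma Oser0 A : Oser A (fun _ => 0) = (fun _ => 0).
Proof.
apply: functional_extensionality => k.
by rewrite /Oser big1 // => t _; rewrite iter_Dser0 mulr0.
Qed.

Lemma iter_Dser_agree t K y y' :
  agree_below (K + t)%N y y' -> agree_below K (iter t Dser y) (iter t Dser y').
Proof.
elim: t K => [|t IH] K; first by rewrite addn0.
rewrite addnS -addSn => /IH agr k lt_kK /=.
by rewrite /Dser !agr // ltnW.
Qed.

Lemma iter_Dser_top t k y y' : agree_below (k + t)%N y y' ->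
  iter t Dser y k - y (k + t)%N = iter t Dser y' k - y' (k + t)%N.
Proof.
elim: t k => [|t IH] k agr; first by rewrite addn0 !subrr.
rewrite /= /Dser -!addrA (@iter_Dser_agree t k.+1 y y') //; last by rewrite addSnnS.
by congr (_ + _); rewrite -addSnnS; apply: IH; rewrite addSnnS.
Qed.

Lemma Oser_agree A s K y y' : (size A <= s.+1)%N ->
  agree_below (K + s)%N y y' -> agree_below K (Oser A y) (Oser A y').
Proof.
move=> le_As agr k lt_kK; rewrite /Oser; apply: eq_bigr => t _.
congr (_ * _); apply: (@iter_Dser_agree t k.+1) => //.
by apply: agree_below_le agr; have := ltn_ord t; lia.
Qed.

Lemma Oser_top A s k y y' : A \is monic -> size A = s.+1 ->
  agree_below (k + s)%N y y' -> Oser A y k - y (k + s)%N = Oser A y' k - y' (k + s)%N.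
Proof.
move=> monA sizeA agr; have lcA := monic_coef_top monA sizeA.
rewrite /Oser sizeA !big_ord_recr /= lcA !mul1r -!addrA; congr (_ + _); last exact: iter_Dser_top.
apply: eq_bigr => t _; congr (_ * _); apply: (@iter_Dser_agree t k.+1) => //.
by apply: agree_below_le agr; have := ltn_ord t; lia.
Qed.

Lemma Oser_cancel A s M y y' : A \is monic -> size A = s.+1 -> agree_below s y y' ->
  agree_below M (Oser A y) (Oser A y') -> agree_below (M + s)%N y y'.
Proof.
move=> monA sizeA agr0; elim: M => [|M IH] agrO; first by rewrite add0n.
have agrM := IH (agree_below_le (leqnSn M) agrO).
move=> k; rewrite addSn ltnS leq_eqVlt => /orP [/eqP ->|]; last exact: agrM.
have := Oser_top monA sizeA agrM; rewrite (agrO M) // => /addrI.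
exact: oppr_inj.
Qed.

Lemma ser_vanish N U j : (size U <= j.+1)%N -> vanish_below (N - j)%N (ser N U).
Proof.
move=> le_Uj k lt_k; rewrite /ser; case: ifP => // le_kN.
by rewrite nth_default // (leq_trans le_Uj) //; lia.
Qed.

Lemma ser_sum N n (H : 'I_n -> {poly R}) k :
  ser N (\sum_(i < n) H i) k = \sum_(i < n) ser N (H i) k.
Proof. by rewrite /ser; case: ifP => _; rewrite ?coef_sum // big1. Qed.

Section MonicOperator.
Variables (D : {poly R}) (d : nat).
Hypotheses (monD : D \is monic) (sizeD : size D = d.+1).

(* As (Oser D w) (K - d) = w K + (terms in w below K), the equation
   Oser D w = y determines w K recursively; Dinv_step is this recursion. *)
Definition Dinv_step (y w : series) : series :=
  fun K => if (K < d)%N then 0 else y (K - d)%N - (Oser D w (K - d)%N - w K).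

Lemma Dinv_step_causal y : causal (Dinv_step y).
Proof.
move=> w w' K agr; rewrite /Dinv_step; case: ltnP => // le_dK.
have top := Oser_top monD sizeD (k := (K - d)%N) (y := w) (y' := w').
by rewrite subnK // in top; rewrite top.
Qed.

Definition Dinv (y : series) : series := causal_fix 0 (Dinv_step y).

Lemma Dinv_fix y K : Dinv y K = Dinv_step y (Dinv y) K.
Proof. exact: causal_fixE (Dinv_step_causal y) K. Qed.

Lemma Oser_Dinv y : Oser D (Dinv y) = y.
Proof.
apply: functional_extensionality => k.
have := Dinv_fix y (k + d); rewrite /Dinv_step ltnNge leq_addl /= addnK.
rewrite opprB addrCA -{1}[Dinv y _]addr0 => /addrI /eqP.
by rewrite eq_sym subr_eq0 => /eqP ->.
Qed.

Lemma Dinv_vanish N y : vanish_below N y -> vanish_below (N + d)%N (Dinv y).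
Proof.
move=> vy; apply: (Oser_cancel monD sizeD).
  by move=> k lt_kd; rewrite Dinv_fix /Dinv_step lt_kd.
by rewrite Oser_Dinv Oser0.
Qed.

Hypothesis constD : const_coefs D.

(* The d-derivatives of D^{-1}(r z^N e^{xz}) have the coefficients of
   r z^N / D at z^{-1}: they satisfy the recurrence of D and start like it. *)
Lemma Dinv_res N r e : iter e Dser (Dinv (ser N r%:P)) N.+1 = r * gam D e.
Proof.
set w := Dinv (ser N r%:P).
have vw : vanish_below (N + d)%N w.
  apply: Dinv_vanish; have := @ser_vanish N r%:P 0; rewrite subn0; apply.
  by rewrite size_polyC leq_b1.
have topw : w (N + d)%N = r.
  have := Oser_top monD sizeD (k := N) vw.
  by rewrite Oser_Dinv Oser0 /ser leqnn subnn coefC subr0 => /eqP; rewrite subr_eq0 => /eqP <-.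
apply: (@recurrence_unique _ D d (fun e => iter e Dser w N.+1) (fun e => r * gam D e)) => //.
- move=> a; transitivity (iter a Dser (Oser D w) N.+1); last first.
    by rewrite Oser_Dinv iter_Dser_ser /ser ltnn.
  rewrite -Oser_const_iter_Dser // /Oser sizeD; apply: eq_bigr => k _.
  by rewrite iterD.
- by move=> a; under eq_bigr do rewrite mulrCA; rewrite -mulr_sumr gam_rec ?mulr0.
- move=> e' lt_ed; have [lt_e'd|def_d] : (e'.+1 < d)%N \/ e'.+1 = d by lia.
    rewrite (gam_lt sizeD lt_e'd) mulr0.
    have agr : agree_below N.+2 (iter e' Dser w) (fun _ => 0).
      by rewrite -(iter_Dser0 e'); apply: iter_Dser_agree; apply: agree_below_le vw; lia.
    exact: agr.
  have d_gt0 : (0 < d)%N by rewrite -def_d.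
  have -> : e' = d.-1 by rewrite -def_d.
  rewrite (gam_top sizeD d_gt0) mulr1.
  have top := @iter_Dser_top d.-1 N.+1 w (fun _ => 0).
  rewrite iter_Dser0 subrr addSnnS prednK // topw in top.
  by apply/eqP; rewrite -subr_eq0 top.
Qed.

(* For B = \sum_l B_l z^l, the series D^{-1} (\sum_l d^l o B_l) (z^N e^{xz}):
   pairing it with an operator A computes the residue of A B / D. *)
Definition pairing_series N B : series :=
  fun k => \sum_(l < size B) iter l Dser (Dinv (ser N (B`_l)%:P)) k.

Lemma res_inf_pairing N A B : res_inf (A * B) D = Oser A (pairing_series N B) N.+1.
Proof.
rewrite (res_inf_mul _ (leqnn (size A)) (leqnn (size B))) /Oser /pairing_series.
apply: eq_bigr => t _.
rewrite (iter_Dser_sum t _ (fun l => iter l Dser (Dinv (ser N (B`_l)%:P)))) mulr_sumr.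
by apply: eq_bigr => l _; rewrite -iterD Dinv_res mulrA.
Qed.

Lemma Oser_pairing N B : Oser D (pairing_series N B) = ser N (dual_symbol B).
Proof.
apply: functional_extensionality => k.
rewrite /pairing_series (Oser_series_sum _ _ (fun l => iter l Dser (Dinv (ser N (B`_l)%:P)))).
rewrite /dual_symbol ser_sum; apply: eq_bigr => l _.
by rewrite Oser_const_iter_Dser // Oser_Dinv iter_Dser_ser.
Qed.

Lemma pairing_vanish N B : vanish_below (N + d - size B)%N (pairing_series N B).
Proof.
move=> k lt_k; rewrite /pairing_series big1 // => l _.
have lt_lB : (l < size B)%N := ltn_ord l.
have agr : agree_below (N + d - size B)%N
    (iter l Dser (Dinv (ser N (B`_l)%:P))) (fun _ => 0).
  rewrite -(iter_Dser0 l); apply: iter_Dser_agree; apply: (@agree_below_le _ (N + d)%N).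
    have := leq_ltn_trans (leq0n k) lt_k; rewrite subn_gt0 => lt_BNd.
    by rewrite addnBAC ?(ltnW lt_BNd) // leq_subLR [(size B + _)%N]addnC leq_add2l ltnW.
  have vser : vanish_below N (ser N (B`_l)%:P).
    by have := @ser_vanish N (B`_l)%:P 0; rewrite subn0; apply; rewrite size_polyC leq_b1.
  exact: Dinv_vanish vser.
exact: agr.
Qed.

End MonicOperator.

Lemma dual_symbol_iter_Dminus n v : dual_symbol (iter n Dm v) = (- 'X) ^+ n * dual_symbol v.
Proof.
elim: n => /= [|n IH]; first by rewrite mul1r.
by rewrite dual_symbol_Dminus IH exprS mulrA mulNr mulNr.
Qed.

(* In the series
   model: if u is the pairing series of Dm^j (Q^* 1), then Q (P u) = D u =
   Q (z^N (-z)^j), so P u = z^N (-z)^j by injectivity of Q, and the residue,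
   read off from d^i P u = z^N d^i (-z)^j, is 0. *)
Lemma darboux_residue (D P Q : {poly R}) i j :
  D \is monic -> const_coefs D -> Q \is monic -> apply_op delta Q P = D ->
  res_inf (iter i Dp P * iter j Dm (apply_adj delta Q 1)) D = 0.
Proof.
move=> monD constD monQ QP_D.
have [d sizeD] := monic_sizeS monD; have [m sizeQ] := monic_sizeS monQ.
set B := iter j Dm (apply_adj delta Q 1).
set c : {poly R} := (- 'X) ^+ j.
have const_c : const_coefs c.
  have -> : c = polyR R ((- 'X) ^+ j) by rewrite /polyR rmorphXn rmorphN /= map_polyX.
  exact: const_coefs_polyR.
have size_c : (size c <= j.+1)%N.
  by rewrite (leq_trans (size_poly_exp_leq _ _)) // size_opp size_polyX mul1n.
set N := (size B + size P + m + j)%N.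
set u := pairing_series D d N B.
have Pu : Oser P u = ser N c.
  apply: functional_extensionality => k.
  apply: (Oser_cancel monQ sizeQ (M := k.+1)); last by rewrite addSn ltnS leq_addr.
  - have vPu : vanish_below m (Oser P u).
      rewrite /vanish_below -(Oser0 P); apply: (Oser_agree (s := size P)) => //.
      apply: (agree_below_le (K := (N + d - size B)%N)); last exact: pairing_vanish.
      by rewrite /N; lia.
    have vc : vanish_below m (ser N c).
      apply: (agree_below_le (K := (N - j)%N)); last exact: ser_vanish.
      by rewrite /N; lia.
    by move=> k' lt_k'm; rewrite vPu // vc.
  - move=> k' _; rewrite -Oser_comp QP_D (Oser_pairing monD sizeD constD).
    rewrite Oser_ser apply_op_const //.
    by rewrite dual_symbol_iter_Dminus dual_symbol_adj mulrC.
by rewrite (res_inf_pairing monD sizeD constD N) Oser_iter_Dplus Pu iter_Dser_ser /ser ltnn.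
Qed.

Section RegularAtZero.
Variables (Reg : pred R) (ev : R -> F).
Hypothesis reg : regular_at0 delta Reg ev.

Lemma mem_alg c : c%:A \in Reg.
Proof. by case: reg => alg _ _; case: (alg c). Qed.

Lemma ev_alg c : ev c%:A = c.
Proof. by case: reg => alg _ _; case: (alg c). Qed.

Lemma mem_add a b : a \in Reg -> b \in Reg -> a + b \in Reg.
Proof. by case: reg => _ ring _ Sa Sb; case: (ring a b Sa Sb). Qed.

Lemma mem_mul a b : a \in Reg -> b \in Reg -> a * b \in Reg.
Proof. by case: reg => _ ring _ Sa Sb; case: (ring a b Sa Sb). Qed.

Lemma ev_add a b : a \in Reg -> b \in Reg -> ev (a + b) = ev a + ev b.
Proof. by case: reg => _ ring _ Sa Sb; case: (ring a b Sa Sb). Qed.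

Lemma ev_mul a b : a \in Reg -> b \in Reg -> ev (a * b) = ev a * ev b.
Proof. by case: reg => _ ring _ Sa Sb; case: (ring a b Sa Sb). Qed.

Lemma mem_deriv a : a \in Reg -> delta a \in Reg.
Proof. by case: reg => _ _; apply. Qed.

Lemma ev0 : ev 0 = 0.
Proof. by rewrite -(scale0r (1 : R)) -in_algE ev_alg. Qed.

Lemma mem0 : 0 \in Reg.
Proof. by rewrite -(scale0r (1 : R)) -in_algE mem_alg. Qed.

Lemma mem_opp a : a \in Reg -> - a \in Reg.
Proof. by move=> Sa; rewrite -mulN1r -scaleN1r -in_algE mem_mul ?mem_alg. Qed.

Lemma ev_sum I r (P : pred I) (G : I -> R) : (forall i, G i \in Reg) ->
  (\sum_(i <- r | P i) G i \in Reg) /\ ev (\sum_(i <- r | P i) G i) = \sum_(i <- r | P i) ev (G i).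
Proof.
move=> SG; apply: (big_rec2 (fun a e => a \in Reg /\ ev a = e)).
  by rewrite mem0 ev0.
by move=> i a e _ [Sa <-]; rewrite mem_add ?ev_add.
Qed.

Definition regular_poly (h : {poly R}) : Prop := forall k, h`_k \in Reg.

Lemma regular_iter_Dplus n h : regular_poly h -> regular_poly (iter n Dp h).
Proof.
move=> Sh; elim: n => //= n IH k; rewrite coef_Dplus mem_add ?mem_deriv //.
by case: eqP => _ //; exact: mem0.
Qed.

Lemma regular_iter_Dminus n h : regular_poly h -> regular_poly (iter n Dm h).
Proof.
move=> Sh; elim: n => //= n IH k; rewrite coef_Dminus mem_add ?mem_deriv ?mem_opp //.
by case: eqP => _ //; exact: mem0.
Qed.

(* Residues commute with evaluation at x = 0, the expansion of 1/h having
   constant coefficients. *)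
Lemma res_inf_ev U V (h : {poly F}) : regular_poly U -> regular_poly V ->
  res_inf (map_poly ev U * map_poly ev V) h = ev (res_inf (U * V) (polyR R h)).
Proof.
move=> SU SV.
have gamE e : gam (polyR R h) e = (gam h e)%:A by rewrite gam_map ?in_algE //; exact: fmorph_inj.
have Sterm (t : 'I_(size U)) (l : 'I_(size V)) : U`_t * V`_l * gam (polyR R h) (t + l)%N \in Reg.
  by rewrite gamE !mem_mul ?mem_alg.
rewrite (res_inf_mul _ (leqnn (size U)) (leqnn (size V))).
rewrite (res_inf_mul _ (size_poly _ _) (size_poly _ _)).
rewrite (ev_sum _ _ (fun t => (ev_sum _ _ (Sterm t)).1)).2; apply: eq_bigr => t _.
rewrite (ev_sum _ _ (Sterm t)).2; apply: eq_bigr => l _.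
by rewrite !coef_map_id0 ?ev0 // !ev_mul ?mem_mul ?gamE ?mem_alg ?ev_alg.
Qed.

End RegularAtZero.

End Derivation.

Unset Implicit Arguments.

Theorem mainTheorem2 (F : fieldType) (R : comAlgType F) (delta : R -> R)
  (f g : {poly F}) (P Q : {poly R}) :
  is_derivation delta ->
  f \is monic -> g \is monic -> P \is monic -> Q \is monic ->
  size P = size f ->
  apply_op delta Q (apply_op delta P 1) = polyR R f * polyR R g ->
  let p := apply_op delta P 1 in
  let qs := apply_adj delta Q 1 in
  (forall i j : nat,
     res_inf (iter i (Dplus delta) p * iter j (Dminus delta) qs)
             (polyR R f * polyR R g) = 0)
  /\
  (forall (S : pred R) (ev : R -> F),
     regular_at0 delta S ev ->
     (forall k, p`_k \in S) -> (forall k, qs`_k \in S) ->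
     forall (n m : nat) (a b : nat -> F),
       let u := \sum_(i < n) a i *: map_poly ev (iter i (Dplus delta) p) in
       let v := \sum_(j < m) b j *: map_poly ev (iter j (Dminus delta) qs) in
       res_inf (u * v) (f * g) = 0).
Proof.
move=> der_delta mon_f mon_g _ mon_Q _ QP_fg p qs.
have fgE : polyR R f * polyR R g = polyR R (f * g) by rewrite /polyR rmorphM.
have residue_zero i j : res_inf (iter i (Dplus delta) p * iter j (Dminus delta) qs)
    (polyR R f * polyR R g) = 0.
  apply: darboux_residue => //.
    by rewrite monicMl ?monic_map.
  by rewrite fgE; exact: const_coefs_polyR.
split=> // S ev reg_S Sp Sq n m a b u v.
rewrite (res_inf_bilinear _ _ _ a b (fun i => map_poly ev (iter i (Dplus delta) p))
                          (fun j => map_poly ev (iter j (Dminus delta) qs))).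
rewrite big1 // => i _; rewrite big1 // => j _.
have Sp_i := regular_iter_Dplus der_delta reg_S i Sp.
have Sq_j := regular_iter_Dminus der_delta reg_S j Sq.
by rewrite (res_inf_ev reg_S _ Sp_i Sq_j) -fgE residue_zero (ev0 reg_S) mulr0.
Qed.
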